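(* Every idempotent in $\overline{\square}_\vee$ splits in $\overline{\square}_\vee$: for every $A \in \overline{\square}_\vee$ and every morphism $f \colon A \to A$ with $ff = f$, there exist $B \in \overline{\square}_\vee$ and morphisms $s \colon B \to A$, $r \colon A \to B$ in $\overline{\square}_\vee$ with $rs = \mathrm{id}_B$ and $sr = f$.
   Context: $\mathbf{SLat}$ is the category of (join-)semilattices—sets with an associative, commutative, idempotent binary operation $\vee$—and homomorphisms preserving $\vee$ (not necessarily preserving bounds or meets). Each semilattice is a poset via $x\le y\iff x\vee y=y$. $\overline{\square}_\vee$ is the full subcategory of $\mathbf{SLat}$ on the finite inhabited semilattices whose induced poset is a distributive lattice. *)

From mathcomp Require Import all_boot.
Set Implicit Arguments. Unset Strict Implicit. Unset Printing Implicit Defensive.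

Definition is_slat (T : Type) (j : T -> T -> T) : Prop :=
  (forall x y z, j x (j y z) = j (j x y) z) /\
  (forall x y, j x y = j y x) /\
  (forall x, j x x = x).

Definition sle (T : Type) (j : T -> T -> T) (x y : T) : Prop := j x y = y.

Definition is_glb_op (T : Type) (j : T -> T -> T) (m : T -> T -> T) : Prop :=
  forall x y,
    sle j (m x y) x /\ sle j (m x y) y /\
    (forall z, sle j z x -> sle j z y -> sle j z (m x y)).

(* Objects of the category \overline{\square}_\vee: finite, inhabited
   semilattices whose induced poset is a distributive lattice
   (i.e. binary meets exist and meet distributes over join). *)
Definition is_fdlat (T : finType) (j : T -> T -> T) : Prop :=
  is_slat j /\ inhabited T /\
  exists m : T -> T -> T, is_glb_op j m /\
    (forall x y z, m x (j y z) = j (m x y) (m x z)).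

Definition slat_hom (A B : Type) (jA : A -> A -> A) (jB : B -> B -> B)
  (f : A -> B) : Prop :=
  forall x y, f (jA x y) = jB (f x) (f y).

From mathcomp Require Import all_boot.

Set Implicit Arguments.
Unset Strict Implicit.
Unset Printing Implicit Defensive.

(* An idempotent join-homomorphism f splits through its set of fixed points
   B, with the inclusion s and the corestriction r of f. Every structure of
   the objects transfers from A to such a join-retract B along r: the join of
   B is r (s x v s y), and r (s x /\ s y) is a meet in B; the meet inherits
   distributivity because r preserves joins. *)

Section JoinRetract.

Variables (A B : Type) (jA : A -> A -> A) (jB : B -> B -> B).
Variables (s : B -> A) (r : A -> B).
Hypothesis s_hom : slat_hom jB jA s.
Hypothesis r_hom : slat_hom jA jB r.
Hypothesis retractK : forall b, r (s b) = b.

Lemma retract_joinE x y : jB x y = r (jA (s x) (s y)).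
Proof. by rewrite -s_hom retractK. Qed.

Lemma sle_section x y : sle jB x y -> sle jA (s x) (s y).
Proof. by rewrite /sle -s_hom => ->. Qed.

Lemma sle_retract a b : sle jA a b -> sle jB (r a) (r b).
Proof. by rewrite /sle -r_hom => ->. Qed.

Lemma slat_retract : is_slat jA -> is_slat jB.
Proof.
move=> [jA_assoc [jA_comm jA_idem]]; split; last split.
- by move=> x y z; rewrite -[LHS]retractK -[RHS]retractK !s_hom jA_assoc.
- by move=> x y; rewrite !retract_joinE jA_comm.
- by move=> x; rewrite retract_joinE jA_idem retractK.
Qed.

Definition retract_meet (m : A -> A -> A) (x y : B) : B := r (m (s x) (s y)).

Lemma glb_retract m : is_glb_op jA m -> is_glb_op jB (retract_meet m).
Proof.
move=> m_glb x y; have [mx [my m_greatest]] := m_glb (s x) (s y).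
split; last split.
- by rewrite -[x in sle _ _ x]retractK; apply: sle_retract.
- by rewrite -[y in sle _ _ y]retractK; apply: sle_retract.
- move=> z zx zy; rewrite -[z]retractK.
  by apply/sle_retract/m_greatest; apply: sle_section.
Qed.

Lemma distr_retract m :
  (forall a b c, m a (jA b c) = jA (m a b) (m a c)) ->
  forall x y z, retract_meet m x (jB y z)
                = jB (retract_meet m x y) (retract_meet m x z).
Proof. by move=> m_distr x y z; rewrite /retract_meet s_hom m_distr r_hom. Qed.

End JoinRetract.

Lemma fdlat_retract (A B : finType) (jA : A -> A -> A) (jB : B -> B -> B)
    (s : B -> A) (r : A -> B) :
  slat_hom jB jA s -> slat_hom jA jB r -> (forall b, r (s b) = b) ->
  is_fdlat jA -> is_fdlat jB.
Proof.
move=> s_hom r_hom retractK [A_slat [[a0] [m [m_glb m_distr]]]].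
split; first exact: slat_retract s_hom retractK A_slat.
split; first exact: inhabits (r a0).
exists (retract_meet s r m); split; first exact: glb_retract.
exact: distr_retract.
Qed.

Section IdempotentSplitting.

Variables (A : eqType) (jA : A -> A -> A) (f : A -> A).
Hypothesis f_hom : slat_hom jA jA f.
Hypothesis f_idem : forall a, f (f a) = f a.

Definition fixpt := {a : A | f a == a}.

Lemma fixptP (x : fixpt) : f (val x) = val x.
Proof. exact: eqP (valP x). Qed.

Lemma fixpt_join_subproof (x y : fixpt) :
  f (jA (val x) (val y)) == jA (val x) (val y).
Proof. by rewrite f_hom !fixptP. Qed.

Definition fixpt_join (x y : fixpt) : fixpt :=
  exist (fun a => f a == a) _ (fixpt_join_subproof x y).

Definition fixpt_of (a : A) : fixpt :=
  exist (fun b => f b == b) (f a) (introT eqP (f_idem a)).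

Lemma val_fixpt_hom : slat_hom fixpt_join jA val.
Proof. by []. Qed.

Lemma fixpt_of_hom : slat_hom jA fixpt_join fixpt_of.
Proof. by move=> a b; apply: val_inj; rewrite /= f_hom. Qed.

Lemma fixpt_ofK (x : fixpt) : fixpt_of (val x) = x.
Proof. by apply: val_inj; rewrite /= fixptP. Qed.

End IdempotentSplitting.

Theorem mainTheorem6 (A : finType) (jA : A -> A -> A) (f : A -> A) :
  is_fdlat jA -> slat_hom jA jA f -> (forall x, f (f x) = f x) ->
  exists (B : finType) (jB : B -> B -> B) (s : B -> A) (r : A -> B),
    is_fdlat jB /\ slat_hom jB jA s /\ slat_hom jA jB r /\
    (forall b, r (s b) = b) /\ (forall a, s (r a) = f a).
Proof.
move=> A_fdlat f_hom f_idem.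
have r_hom := fixpt_of_hom f_hom f_idem.
have retractK := fixpt_ofK f_idem.
exists (fixpt f), (fixpt_join f_hom), val, (fixpt_of f_idem).
have s_hom := val_fixpt_hom f_hom.
by split; [exact: fdlat_retract s_hom r_hom retractK A_fdlat | split].
Qed.
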